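(* Let $\mathfrak g$ be an $n$-dimensional filiform Lie algebra with associated triple $(z_1,n-2,n)$, $z_1<n-2$. Then for every $\ell$ with $3\le\ell\le\theta_2(\mathfrak g)-1$, $$\dim[C^2\mathfrak g,C^{\ell+1}\mathfrak g]=\dim[C^2\mathfrak g,C^\ell\mathfrak g]-1.$$ Moreover $\theta_2(\mathfrak g)=\dim[C^2\mathfrak g,C^2\mathfrak g]+3$.
   Context: All Lie algebras are over $\mathbb C$; $C^1\mathfrak g=\mathfrak g$, $C^k\mathfrak g=[C^{k-1}\mathfrak g,\mathfrak g]$. A Lie algebra is filiform if $\dim\mathfrak g=n\ge2$ and $\dim C^k\mathfrak g=n-k$ for $2\le k\le n$. An adapted basis of a filiform $\mathfrak g$ is a basis $\{e_1,\dots,e_n\}$ with $[e_1,e_h]=e_{h-1}$ ($3\le h\le n$), $[e_2,e_h]=0$ ($1\le h\le n$), $[e_3,e_h]=0$ ($2\le h\le n$). For non-model filiform $\mathfrak g$, $z_1=\min\{k\ge4:[e_k,e_n]\ne0\}$, $z_2=\min\{k\ge4:[e_k,e_{k+1}]\ne0\}$ (in any adapted basis) are invariants; $(z_1,z_2,n)$ is the associated triple. For a nilpotent Lie algebra $\mathfrak g$ and $k\ge1$, $\theta_k(\mathfrak g)$ is the minimal $\ell$ such that $[C^k\mathfrak g,C^\ell\mathfrak g]=\{0\}$. *)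

From HB Require Import structures.
From mathcomp Require Import all_boot all_algebra.
From mathcomp Require Import complex.
From mathcomp Require Import Rstruct.
Set Implicit Arguments.
Unset Strict Implicit.
Unset Printing Implicit Defensive.
Import GRing.Theory.
Local Open Scope ring_scope.

Definition Cplx : fieldType := (Rdefinitions.R)[i].

Section Lie.
Variable V : vectType Cplx.
Variable br : V -> V -> V.

Definition is_lie_bracket : Prop :=
  [/\ forall (a : Cplx) (x y z : V), br (a *: x + y) z = a *: br x z + br y z,
      forall (a : Cplx) (x y z : V), br z (a *: x + y) = a *: br z x + br z y,
      forall x : V, br x x = 0
    & forall x y z : V, br x (br y z) + br y (br z x) + br z (br x y) = 0].

(* [A, B]: the subspace spanned by all brackets [a, b], a in A, b in B
   (by bilinearity it is spanned by the brackets of basis vectors). *)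
Definition brsp (A B : {vspace V}) : {vspace V} :=
  <<[seq br a b | a <- vbasis A, b <- vbasis B]>>%VS.

(* Lower central series: C^1 = g, C^k = [C^(k-1), g]  (C^0 := g, unused). *)
Fixpoint lcs (k : nat) : {vspace V} :=
  match k with
  | 0 => fullv
  | k'.+1 => if k' is 0 then fullv else brsp (lcs k') fullv
  end.

Definition filiform : Prop :=
  (2 <= \dim {:V})%N /\
  forall k : nat, (2 <= k <= \dim {:V})%N -> \dim (lcs k) = (\dim {:V} - k)%N.

(* theta_k(g): minimal l (>= 1) with [C^k g, C^l g] = 0.  For a nilpotent
   Lie algebra of dimension n one has C^(n+1) g = 0, so the minimum is
   attained in 1..n+1 and is computed by searching that range. *)
Definition theta (k : nat) : nat :=
  nth 0%N [seq l <- iota 1 (\dim {:V}).+1 | brsp (lcs k) (lcs l) == 0%VS] 0.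

Definition adapted_basis (e : nat -> V) : Prop :=
  let n := \dim {:V} in
  [/\ basis_of fullv [seq e i | i <- iota 1 n],
      forall h : nat, (3 <= h <= n)%N -> br (e 1%N) (e h) = e h.-1,
      forall h : nat, (1 <= h <= n)%N -> br (e 2%N) (e h) = 0
    & forall h : nat, (2 <= h <= n)%N -> br (e 3%N) (e h) = 0].

(* (z1, z2, n) is the associated triple of the (non-model) filiform g:
   in an adapted basis,
     z1 = min {k >= 4 : [e_k, e_n] <> 0},
     z2 = min {k >= 4 : [e_k, e_(k+1)] <> 0}.
   (Both sets being nonempty forces g to be non-model.) *)
Definition assoc_triple (z1 z2 n : nat) : Prop :=
  [/\ filiform, n = \dim {:V} &
  exists e : nat -> V,
    [/\ adapted_basis e,
        [/\ (4 <= z1 <= n)%N, br (e z1) (e n) != 0 &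
            forall k : nat, (4 <= k < z1)%N -> br (e k) (e n) = 0]
      & [/\ (4 <= z2)%N, (z2 < n)%N, br (e z2) (e z2.+1) != 0 &
            forall k : nat, (4 <= k < z2)%N -> br (e k) (e k.+1) = 0]]].

End Lie.

From HB Require Import structures.
From mathcomp Require Import all_boot all_algebra.
From mathcomp Require Import complex.
From mathcomp Require Import Rstruct.
From mathcomp Require Import zify.
Set Implicit Arguments.
Unset Strict Implicit.
Unset Printing Implicit Defensive.
Import GRing.Theory.
Local Open Scope ring_scope.

(* Let D = ad e_1: it maps e_h to e_(h-1) and kills e_2, and C^k g = <e_2, ..., e_(n-k+1)>.
   Since D is a derivation, the vanishing of [e_k, e_(k+1)] for k < z_2 = n - 2 propagates to
   [e_i, e_j] = 0 for all 2 <= i, j <= n - 2, while [e_j, e_(n-1)] = D^(n-2-j) v with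
   v = [e_(n-2), e_(n-1)] <> 0.  Hence [C^2 g, C^l g] is spanned by the D^s v with s >= l - 3.
   If e_m is the highest basis vector occurring in v, the iterates D^s v with s >= a span
   <e_2, ..., e_(m-a)>, so dim [C^2 g, C^l g] = m - l + 2 for l >= 3 (and m - 1 for l = 2):
   it drops by one at each step and first vanishes at l = theta_2 = m + 2. *)

Lemma nth_filter_iota_first (P : pred nat) (N t : nat) :
  (1 <= t <= N)%N -> P t -> (forall l, (1 <= l < t)%N -> ~~ P l) ->
  nth 0%N [seq l <- iota 1 N | P l] 0 = t.
Proof.
move=> ht Pt before_t.
have -> : N = ((t - 1) + (N - t).+1)%N by lia.
rewrite iotaD filter_cat (@eq_in_filter _ P pred0) ?filter_pred0 /=; last first.
  by move=> l; rewrite mem_iota => hl; apply/negbTE/before_t; lia.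
by rewrite (_ : 1 + (t - 1) = t)%N ?Pt //; lia.
Qed.

Lemma mem_span_lin (K : fieldType) (U W : vectType K) (f : U -> W)
    (S : {vspace W}) (X : seq U) :
  (forall a x y, f (a *: x + y) = a *: f x + f y) ->
  {in X, forall x, f x \in S} -> forall x, x \in <<X>>%VS -> f x \in S.
Proof.
move=> f_lin fX x /(coord_span (X := in_tuple X)) ->.
have fD y z : f (y + z) = f y + f z by have := f_lin 1 y z; rewrite !scale1r.
have f0 : f 0 = 0 by apply: (addrI (f 0)); rewrite -fD !addr0.
apply: (big_ind (fun y => f y \in S)); first by rewrite f0 mem0v.
  by move=> y z Sy Sz; rewrite fD memvD.
move=> i _; rewrite -[_ *: _]addr0 f_lin f0 addr0.
by rewrite memvZ // fX // mem_nth.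
Qed.

Section LowerSpan.
Variables (K : fieldType) (V : vectType K) (e : nat -> V).

Definition lower_span k := <<[seq e i | i <- iota 2 k.-1]>>%VS.

Lemma mem_lower_span i k : (2 <= i <= k)%N -> e i \in lower_span k.
Proof. by move=> hi; apply/memv_span/map_f; rewrite mem_iota; lia. Qed.

Lemma lower_span_sub (U : {vspace V}) k :
  (forall i, (2 <= i <= k)%N -> e i \in U) -> (lower_span k <= U)%VS.
Proof.
move=> eU; apply/span_subvP => _ /mapP[i + ->]; rewrite mem_iota => hi.
by apply: eU; lia.
Qed.

Lemma lower_spanS k k' : (k <= k')%N -> (lower_span k <= lower_span k')%VS.
Proof. by move=> hk; apply: lower_span_sub => i hi; apply: mem_lower_span; lia. Qed.

Variable n : nat.
Hypothesis e_free : free [seq e i | i <- iota 2 n.-1].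

Lemma dim_lower_span k : (k <= n)%N -> \dim (lower_span k) = k.-1.
Proof.
move=> hk; move: e_free; rewrite (_ : n.-1 = k.-1 + (n.-1 - k.-1))%N; last by lia.
rewrite iotaD map_cat => /catl_free /eqP.
by rewrite size_map size_iota.
Qed.

End LowerSpan.

Section ShiftOrbit.
Variables (K : fieldType) (V : vectType K) (e : nat -> V) (D : V -> V).
Variables (n N : nat) (v : V).

(* The iterates with [s >= N - 1] are omitted: they vanish when [v \in lower_span e N]. *)
Definition orbit_span a := <<[seq iter s D v | s <- iota a (N.-1 - a)]>>%VS.

Lemma mem_orbit_span a s : (a <= s < N.-1)%N -> iter s D v \in orbit_span a.
Proof. by move=> hs; apply/memv_span/map_f; rewrite mem_iota; lia. Qed.

Lemma orbit_spanS a b : (a <= b)%N -> (orbit_span b <= orbit_span a)%VS.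
Proof.
move=> hab; apply/span_subvP => _ /mapP[s + ->]; rewrite mem_iota => hs.
by apply: mem_orbit_span; lia.
Qed.

Hypothesis D_lin : forall a x y, D (a *: x + y) = a *: D x + D y.
Hypothesis D_e2 : D (e 2) = 0.
Hypothesis D_e : forall i, (3 <= i <= n)%N -> D (e i) = e i.-1.

Lemma shift_lower_span k x :
  (k <= n)%N -> x \in lower_span e k -> D x \in lower_span e k.-1.
Proof.
move=> hk; apply: mem_span_lin => // _ /mapP[i + ->]; rewrite mem_iota => hi.
have [->|i_neq2] := eqVneq i 2%N; first by rewrite D_e2 mem0v.
by rewrite D_e; [apply: mem_lower_span|]; lia.
Qed.

Lemma iter_shift_lower_span s k x :
  (k <= n)%N -> x \in lower_span e k -> iter s D x \in lower_span e (k - s).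
Proof.
move=> hk hx; elim: s => [|s IH]; first by rewrite subn0.
by rewrite iterS subnS; apply: shift_lower_span => //; lia.
Qed.

Lemma iter_shift_e s i : (i <= n)%N -> (s + 2 <= i)%N -> iter s D (e i) = e (i - s).
Proof.
move=> hi; elim: s => [|s IH] hs; first by rewrite subn0.
by rewrite iterS IH ?D_e; [congr e|..]; lia.
Qed.

Lemma iter_shift_lin s a x y : iter s D (a *: x + y) = a *: iter s D x + iter s D y.
Proof. by elim: s => [|s IH] //; rewrite !iterS IH D_lin. Qed.

Hypothesis v_neq0 : v != 0.

Section Height.
Variable m : nat.
Hypothesis v_height : v \in lower_span e m.

Lemma height_ge2 : (2 <= m)%N.
Proof.
case: (leqP 2 m) => // hm; move: v_height.
by rewrite /lower_span (_ : m.-1 = 0)%N ?span_nil ?memv0 ?(negbTE v_neq0) //; lia.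
Qed.

Hypothesis height_min : forall k, v \in lower_span e k -> (m <= k)%N.

Lemma height_lead :
  exists c w, [/\ c != 0, w \in lower_span e m.-1 & v = c *: e m + w].
Proof.
have hm := height_ge2; move: v_height.
rewrite {1}/lower_span (_ : m.-1 = m.-2 + 1)%N; last by lia.
rewrite iotaD map_cat span_cat (_ : 2 + m.-2 = m)%N /=; last by lia.
rewrite span_seq1 => /memv_addP[w hw [_ /vlineP[c ->] v_eq]].
exists c, w; split; [|by rewrite addn1|by rewrite v_eq addrC].
apply/eqP => c0; suff /height_min : v \in lower_span e m.-1 by lia.
by rewrite v_eq c0 scale0r addr0.
Qed.

Hypothesis height_le : (m <= N)%N.
Hypothesis height_le_n : (m <= n)%N.

Lemma e_orbit_span i : (2 <= i <= m)%N -> e i \in orbit_span (m - i).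
Proof.
have hm2 := height_ge2; have [c [w [c_neq0 hw v_eq]]] := height_lead.
elim: i {-2}i (leqnn i) => [|j IH] i hij hi; first lia.
have -> : e i = c^-1 *: (iter (m - i) D v - iter (m - i) D w).
  rewrite v_eq iter_shift_lin iter_shift_e ?subKn; try lia.
  by rewrite addrK scalerA mulVf // scale1r.
rewrite memvZ // memvB //; first by apply: mem_orbit_span; lia.
have lower_orbit : (lower_span e (m.-1 - (m - i)) <= orbit_span (m - i))%VS.
  apply: lower_span_sub => k hk.
  by apply: (subvP (orbit_spanS (_ : m - i <= m - k)%N)); [|apply: IH]; lia.
by apply: (subvP lower_orbit); apply: iter_shift_lower_span hw; lia.
Qed.

Lemma orbit_span_height a : orbit_span a = lower_span e (m - a).
Proof.
have hm2 := height_ge2.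
apply/eqP; rewrite eqEsubv; apply/andP; split.
  apply/span_subvP => _ /mapP[s + ->]; rewrite mem_iota => hs.
  by apply: (subvP (lower_spanS e (_ : m - s <= m - a)%N));
    [|apply: iter_shift_lower_span v_height]; lia.
apply: lower_span_sub => i hi.
by apply: (subvP (orbit_spanS (_ : a <= m - i)%N)); [|apply: e_orbit_span]; lia.
Qed.

End Height.

Hypothesis N_le_n : (N <= n)%N.
Hypothesis v_lower : v \in lower_span e N.

Lemma orbit_span_lower_span :
  exists2 m, (2 <= m <= N)%N & forall a, orbit_span a = lower_span e (m - a).
Proof.
have [m v_height height_min] := ex_minnP (ex_intro (fun k => v \in lower_span e k) N v_lower).
have height_le : (m <= N)%N by apply: height_min.
have height_le_n : (m <= n)%N by apply: leq_trans N_le_n.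
by exists m; [rewrite height_ge2 | exact: orbit_span_height].
Qed.

End ShiftOrbit.

Section LieBracket.
Variables (V : vectType Cplx) (br : V -> V -> V).
Hypothesis br_lie : is_lie_bracket br.

Lemma br_linl z a x y : br (a *: x + y) z = a *: br x z + br y z.
Proof. by case: br_lie => lin _ _ _; apply: lin. Qed.

Lemma br_linr z a x y : br z (a *: x + y) = a *: br z x + br z y.
Proof. by case: br_lie => _ lin _ _; apply: lin. Qed.

Lemma brxx x : br x x = 0.
Proof. by case: br_lie => _ _ alt _; apply: alt. Qed.

Lemma br0r x : br x 0 = 0.
Proof.
have := br_linr x 1 0 0; rewrite !scale1r !addr0 => h.
by apply: (addrI (br x 0)); rewrite addr0 -h.
Qed.

Lemma brDl x y z : br (x + y) z = br x z + br y z.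
Proof. by have := br_linl z 1 x y; rewrite !scale1r. Qed.

Lemma brDr x y z : br x (y + z) = br x y + br x z.
Proof. by have := br_linr x 1 y z; rewrite !scale1r. Qed.

Lemma br_anti x y : br x y = - br y x.
Proof.
apply/eqP; rewrite -addr_eq0.
by have := brxx (x + y); rewrite brDl !brDr !brxx add0r addr0 => ->.
Qed.

Lemma brNr x y : br x (- y) = - br x y.
Proof. by have := br_linr x (-1) y 0; rewrite !addr0 br0r addr0 !scaleN1r. Qed.

Lemma br_leibniz x y z : br z (br x y) = br (br z x) y + br x (br z y).
Proof.
case: br_lie => _ _ _ /(_ z x y) /eqP.
rewrite (br_anti y z) brNr (br_anti y (br z x)) -addrA addr_eq0 opprD !opprK.
by move=> /eqP ->; rewrite addrC.
Qed.

Lemma mem_span_br (X Y : seq V) (S : {vspace V}) :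
  (forall x y, x \in X -> y \in Y -> br x y \in S) ->
  forall a b, a \in <<X>>%VS -> b \in <<Y>>%VS -> br a b \in S.
Proof.
move=> XY a b Xa Yb; apply: mem_span_lin Yb => [|y Yy]; first exact: br_linr.
by apply: (mem_span_lin (f := br^~ y)) Xa => [|x Xx]; [exact: br_linl | exact: XY].
Qed.

Lemma brsp_mem (A B : {vspace V}) a b : a \in A -> b \in B -> br a b \in brsp br A B.
Proof.
move=> Aa Bb; apply: (mem_span_br (X := vbasis A) (Y := vbasis B)).
- by move=> x y Xx Yy; apply/memv_span/allpairs_f.
- by rewrite (span_basis (vbasisP A)).
- by rewrite (span_basis (vbasisP B)).
Qed.

Lemma brsp_sub (A B S : {vspace V}) :
  (forall a b, a \in A -> b \in B -> br a b \in S) -> (brsp br A B <= S)%VS.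
Proof.
move=> AB; apply/span_subvP => _ /allpairsP[[x y] /= [Ax By ->]].
by apply: AB; apply: vbasis_mem.
Qed.

Lemma lcsSn k : (1 <= k)%N -> lcs br k.+1 = brsp br (lcs br k) fullv.
Proof. by case: k. Qed.

Lemma theta_first_zero k t :
  (1 <= t <= (\dim {:V}).+1)%N -> brsp br (lcs br k) (lcs br t) = 0%VS ->
  (forall l, (1 <= l < t)%N -> brsp br (lcs br k) (lcs br l) != 0%VS) ->
  theta br k = t.
Proof. by move=> ht zero_t nonzero; apply: nth_filter_iota_first => //; apply/eqP. Qed.

End LieBracket.

Section Filiform.
Variables (V : vectType Cplx) (br : V -> V -> V) (e : nat -> V).
Local Notation n := (\dim {:V}).
Hypothesis br_lie : is_lie_bracket br.
Hypothesis e_basis : basis_of fullv [seq e i | i <- iota 1 n].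
Hypothesis br_e1 : forall h, (3 <= h <= n)%N -> br (e 1) (e h) = e h.-1.
Hypothesis br_e2 : forall h, (1 <= h <= n)%N -> br (e 2) (e h) = 0.
Hypothesis br_e3 : forall h, (2 <= h <= n)%N -> br (e 3) (e h) = 0.
Hypothesis dim_ge2 : (2 <= n)%N.
Hypothesis dim_lcs : forall k, (2 <= k <= n)%N -> \dim (lcs br k) = (n - k)%N.

Let D := br (e 1).

Lemma ad_e1_lin a x y : D (a *: x + y) = a *: D x + D y.
Proof. exact: br_linr. Qed.

Lemma ad_e1_e2 : D (e 2) = 0.
Proof. by rewrite /D br_anti // br_e2 ?oppr0 //; lia. Qed.

Lemma e_free : free [seq e i | i <- iota 2 n.-1].
Proof.
have n_gt0 : (0 < n)%N by lia.
by move: (basis_free e_basis); rewrite -(prednK n_gt0) /= free_cons => /andP[].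
Qed.

Lemma lcs_lower_span k : (2 <= k <= n)%N -> lcs br k = lower_span e (n - k + 1).
Proof.
have lower_lcs j : (1 <= j <= n)%N -> (lower_span e (n - j + 1) <= lcs br j)%VS.
  elim: j => [|j IH] hj; first lia.
  have [->|j_gt0] := posnP j; first exact: subvf.
  rewrite lcsSn //; apply: lower_span_sub => i hi.
  have -> : e i = - br (e i.+1) (e 1) by rewrite br_anti // opprK br_e1 //; lia.
  rewrite memvN; apply: brsp_mem => //; last exact: memvf.
  by apply: (subvP (IH _)); [|apply: mem_lower_span]; lia.
move=> hk; apply/eqP; rewrite eq_sym eqEdim lower_lcs /=; last lia.
by rewrite (dim_lower_span e_free) ?dim_lcs //; lia.
Qed.

Lemma ad_e1_br a b : (3 <= a <= n)%N -> (3 <= b <= n)%N ->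
  D (br (e a) (e b)) = br (e a.-1) (e b) + br (e a) (e b.-1).
Proof. by move=> ha hb; rewrite /D br_leibniz // !br_e1. Qed.

Hypothesis z2_ge4 : (4 <= n - 2)%N.
Hypothesis br_e_succ : forall k, (4 <= k < n - 2)%N -> br (e k) (e k.+1) = 0.

Lemma br_e_low_eq0 d i : (2 <= i)%N -> (i + d <= n - 2)%N -> br (e i) (e (i + d)) = 0.
Proof.
elim/ltn_ind: d i => -[|[|d]] IH i hi hid; first by rewrite addn0 brxx.
  rewrite addn1; have [i_gt3|i_le3] := ltnP 3 i; first by rewrite br_e_succ //; lia.
  have [->|i_neq2] := eqVneq i 2%N; first by rewrite br_e2 //; lia.
  by rewrite (_ : i = 3)%N ?br_e3 //; lia.
have := @ad_e1_br i.+1 (i + d.+2) ltac:(lia) ltac:(lia).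
rewrite (_ : (i + d.+2).-1 = i.+1 + d)%N; last lia.
rewrite (_ : i + d.+2 = i.+1 + d.+1)%N; last lia.
rewrite (IH d) 1?(IH d.+1) ?addr0; try lia.
by rewrite /D br0r // => ->.
Qed.

Let v := br (e (n - 2)) (e (n - 1)).

Lemma br_e_subtop j : (2 <= j <= n - 2)%N -> br (e j) (e (n - 1)) = iter (n - 2 - j) D v.
Proof.
move=> hj; rewrite -[in e j](@subKn j (n - 2)); last lia.
have : (n - 2 - j <= n - 4)%N by lia.
elim: (n - 2 - j)%N => [|s IH] hs; first by rewrite subn0.
rewrite iterS -IH; last lia.
rewrite ad_e1_br; [|lia|lia].
rewrite (_ : (n - 1).-1 = n - 2 - s + s)%N; last lia.
rewrite (@br_e_low_eq0 s) ?addr0; [|lia|lia].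
by rewrite (_ : (n - 2 - s).-1 = n - 2 - s.+1)%N //; lia.
Qed.

Lemma v_lower : v \in lower_span e (n - 2).
Proof.
rewrite (_ : n - 2 = n - 3 + 1)%N -?lcs_lower_span ?[lcs br 3]lcsSn //; try lia.
apply: brsp_mem => //; last exact: memvf.
by rewrite lcs_lower_span ?mem_lower_span //; lia.
Qed.

Lemma brsp_lcs2_orbit l : (2 <= l <= n)%N ->
  brsp br (lcs br 2) (lcs br l) = orbit_span D (n - 2) v (l - 3).
Proof.
move=> hl; rewrite !lcs_lower_span; try lia.
apply/eqP; rewrite eqEsubv; apply/andP; split.
  apply: brsp_sub => a b; apply: mem_span_br => // _ _ /mapP[i + ->] /mapP[j + ->].
  rewrite !mem_iota => hi hj.
  have [i_top|i_low] := eqVneq i (n - 1)%N; have [j_top|j_low] := eqVneq j (n - 1)%N.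
  - by rewrite i_top j_top brxx // mem0v.
  - by rewrite i_top br_anti // br_e_subtop ?memvN ?mem_orbit_span //; lia.
  - by rewrite j_top br_e_subtop ?mem_orbit_span //; lia.
  have [ij|ji] := leqP i j.
    by rewrite -(subnKC ij) (@br_e_low_eq0 (j - i)) ?mem0v //; lia.
  by rewrite br_anti // -(subnKC (ltnW ji)) (@br_e_low_eq0 (i - j)) ?oppr0 ?mem0v //; lia.
apply/span_subvP => _ /mapP[s + ->]; rewrite mem_iota => hs.
rewrite -[s](@subKn s (n - 2)) -?br_e_subtop; try lia.
by rewrite br_anti // memvN; apply: brsp_mem => //; apply: mem_lower_span; lia.
Qed.

Hypothesis br_top_neq0 : br (e (n - 2)) (e (n - 2).+1) != 0.

Lemma v_neq0 : v != 0.
Proof. by rewrite /v (_ : n - 1 = (n - 2).+1)%N //; lia. Qed.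

Lemma dim_brsp_lcs2 : exists m, [/\ (2 <= m <= n - 2)%N,
  forall l, (2 <= l <= n)%N -> \dim (brsp br (lcs br 2) (lcs br l)) = (m - (l - 3)).-1
  & theta br 2 = (m + 2)%N].
Proof.
have [m hm orbit_lower] := orbit_span_lower_span ad_e1_lin ad_e1_e2 br_e1 v_neq0
  (leq_subr 2 n) v_lower.
have dim_brsp l : (2 <= l <= n)%N ->
    \dim (brsp br (lcs br 2) (lcs br l)) = (m - (l - 3)).-1.
  by move=> hl; rewrite brsp_lcs2_orbit // orbit_lower (dim_lower_span e_free) //; lia.
exists m; split=> //; apply: theta_first_zero; first lia.
  by apply/eqP; rewrite -dimv_eq0 dim_brsp; lia.
move=> l hl; rewrite -dimv_eq0.
have [->|l_neq1] := eqVneq l 1%N; last by rewrite dim_brsp; lia.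
by rewrite (_ : lcs br 1 = fullv) // -lcsSn // dim_lcs; lia.
Qed.

End Filiform.

Theorem mainTheorem13 (V : vectType Cplx) (br : V -> V -> V) (z1 n : nat) :
  is_lie_bracket br ->
  assoc_triple br z1 (n - 2) n ->
  (z1 < n - 2)%N ->
  (forall l : nat, (3 <= l <= theta br 2 - 1)%N ->
     \dim (brsp br (lcs br 2) (lcs br l.+1)) =
       (\dim (brsp br (lcs br 2) (lcs br l)) - 1)%N)
  /\ theta br 2 = (\dim (brsp br (lcs br 2) (lcs br 2)) + 3)%N.
Proof.
move=> br_lie [[dim_ge2 dim_lcs] ->].
move=> [e [[e_basis br_e1 br_e2 br_e3] _ [z2_ge4 _ br_top_neq0 br_e_succ]]] _.
have [m [hm dim_brsp ->]] :=
  dim_brsp_lcs2 br_lie e_basis br_e1 br_e2 br_e3 dim_ge2 dim_lcs z2_ge4 br_e_succ br_top_neq0.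
by split=> [l hl|]; rewrite !dim_brsp; lia.
Qed.
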